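(* Let $H\in\mathbb{R}^{N\times n}$ with $H^TH$ symmetric positive semidefinite (possibly singular), and let $R\in\mathbb{R}^{n\times n}$ be symmetric positive definite. Define $F(R)=H^TH(H^TH+R)^{-1}$, and for each integer $c\ge0$ define $$F_{aim}(H,R,c)=(H^TH+R)^{-1}\sum_{i=0}^cF(R)^i,\qquad F_{ar}(R)=(H^TH)^{\dagger}-F_{aim}(H,R,c).$$ Then $$\lim_{c\to+\infty}F_{ar}(R)=(H^TH)^{\dagger}-R^{-1}.$$
   Context: $(H^TH)^{\dagger}$ denotes the Moore–Penrose pseudo-inverse of $H^TH$. *)

From HB Require Import structures.
From mathcomp Require Import all_boot all_order all_algebra.
From mathcomp Require Import all_classical all_reals all_analysis.
Set Implicit Arguments. Unset Strict Implicit. Unset Printing Implicit Defensive.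
Import Order.TTheory GRing.Theory Num.Theory.
Local Open Scope ring_scope.
Local Open Scope classical_set_scope.

Definition is_MP_pinv (R : realType) (m n : nat) (A : 'M[R]_(m, n))
    (X : 'M[R]_(n, m)) : Prop :=
  [/\ A *m X *m A = A, X *m A *m X = X,
      (A *m X)^T = A *m X & (X *m A)^T = X *m A].

(* The Moore--Penrose pseudo-inverse (exists and is unique for real matrices). *)
Definition mp_pinv (R : realType) (m n : nat) (A : 'M[R]_(m, n)) : 'M[R]_(n, m) :=
  xget 0 [set X | is_MP_pinv A X].

Definition sym_posdef (R : realType) (n : nat) (M : 'M[R]_n) : Prop :=
  M^T = M /\ forall x : 'rV[R]_n, x != 0 -> 0 < (x *m M *m x^T) 0 0.

Definition F_mat (R : realType) (n : nat) (A Rm : 'M[R]_n) : 'M[R]_n :=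
  A *m invmx (A + Rm).

Definition F_aim (R : realType) (N n : nat) (H : 'M[R]_(N, n)) (Rm : 'M[R]_n)
    (c : nat) : 'M[R]_n :=
  invmx (H^T *m H + Rm) *m \sum_(i < c.+1) (F_mat (H^T *m H) Rm) ^+ i.

Definition F_ar (R : realType) (N n : nat) (H : 'M[R]_(N, n)) (Rm : 'M[R]_n)
    (c : nat) : 'M[R]_n :=
  mp_pinv (H^T *m H) - F_aim H Rm c.

From HB Require Import structures.
From mathcomp Require Import all_boot all_order all_algebra.
From mathcomp Require Import all_classical all_reals all_analysis.
From mathcomp Require Import ring lra.
Import Order.TTheory GRing.Theory Num.Theory.
Import numFieldNormedType.Exports.
Local Open Scope classical_set_scope.
Local Open Scope ring_scope.
Set Implicit Arguments. Unset Strict Implicit. Unset Printing Implicit Defensive.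

(* With A = H^T H, S = A + R and F = A S^-1 we have 1 - F = R S^-1, so the
   geometric sum telescopes to F_aim = R^-1 (1 - F^(c+1)) and it suffices that
   F^k -> 0. F is a strict contraction for the energy u S u^T of row vectors:
   if v = u F then v S = u A, and positivity of A on u - v gives
   v S v^T <= u A u^T. As R is positive definite, compactness of the unit
   sphere gives u A u^T <= t u R u^T for some t, whence
   v S v^T <= t/(1+t) u S u^T. *)

Lemma continuous_sum (T : topologicalType) (R : realType) (I : Type)
    (r : seq I) (P : pred I) (f : I -> T -> R) :
  (forall i, continuous (f i)) ->
  continuous (fun x => \sum_(i <- r | P i) f i x).
Proof.
move=> fc; rewrite -fct_sumE.
apply: (big_ind (fun g : T -> R => continuous g)) => //.
- by move=> x; exact: cst_continuous.
- by move=> g h gc hc x; exact: (continuousD (gc x) (hc x)).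
Qed.

Lemma sqr_norm_geometric_cvg0 (R : realType) (V : normedModType R)
    (u : nat -> V) (C q : R) :
  `|q| < 1 -> (forall k, `|u k| ^+ 2 <= C * q ^+ k) -> u @ \oo --> 0.
Proof.
move=> q1 uCq; apply: norm_cvg0.
have -> : (fun k => `|u k|) = Num.sqrt \o (fun k => `|u k| ^+ 2).
  by apply/funext => k /=; rewrite sqrtr_sqr normr_id.
rewrite -sqrtr0; apply: continuous_cvg; first exact: sqrt_continuous.
apply: (@squeeze_cvgr _ _ _ _ (cst 0) (geometric C q)).
- by apply: nearW => k; rewrite sqr_ge0 uCq.
- exact: cvg_cst.
- exact: cvg_geometric.
Qed.

Section MatrixNorm.
Variables (R : realType) (m n : nat).
Implicit Types M : 'M[R]_(m, n).

Lemma mx_entry_le_norm M i j : `|M i j| <= `|M|.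
Proof.
rewrite -[`|M|]/(mx_norm M) mx_normrE.
exact: (le_bigmax _ (fun ij : 'I_m * 'I_n => `|M ij.1 ij.2|) (i, j)).
Qed.

Lemma sqr_mx_norm_le M b :
  0 <= b -> (forall i j, `|M i j| ^+ 2 <= b) -> `|M| ^+ 2 <= b.
Proof.
rewrite -[`|M|]/(mx_norm M) => b0 Mb.
have [->|/mx_norm_neq0 [[i j] ->]] := eqVneq (mx_norm M) 0; last exact: Mb.
by rewrite expr0n.
Qed.

End MatrixNorm.

Section QuadraticForms.
Variables (R : realType) (n : nat).
Implicit Types (A M S : 'M[R]_n) (u v x : 'rV[R]_n).

Definition mxform A u v : R := (u *m A *m v^T) 0 0.

Definition posemidef A := forall x, 0 <= mxform A x x.

(* Convertible to the positivity part of [sym_posdef]. *)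
Definition posdef A := forall x, x != 0 -> 0 < mxform A x x.

Lemma mxformE A u v : mxform A u v = \sum_j \sum_i u 0 i * A i j * v 0 j.
Proof.
rewrite /mxform mxE; apply: eq_bigr => j _; rewrite mxE big_distrl /=.
by apply: eq_bigr => i _; rewrite mxE.
Qed.

Lemma mxform0 A v : mxform A 0 v = 0.
Proof. by rewrite /mxform !mul0mx mxE. Qed.

Lemma mxformD A M u v : mxform (A + M) u v = mxform A u v + mxform M u v.
Proof. by rewrite /mxform mulmxDr mulmxDl mxE. Qed.

Lemma mxformZZ A a u : mxform A (a *: u) (a *: u) = a ^+ 2 * mxform A u u.
Proof. by rewrite /mxform linearZ /= -scalemxAr -!scalemxAl !mxE mulrA -expr2. Qed.

Lemma mxformBB A u v :
  mxform A (u - v) (u - v) =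
  mxform A u u - mxform A u v - mxform A v u + mxform A v v.
Proof.
rewrite /mxform linearB /= !mulmxBl !mulmxBr.
set uu := u *m A *m u^T; set uv := u *m A *m v^T.
set vu := v *m A *m u^T; set vv := v *m A *m v^T.
by rewrite !mxE; ring.
Qed.

Lemma mxform_sym A u v : A^T = A -> mxform A u v = mxform A v u.
Proof.
move=> sA; rewrite /mxform -[in LHS](trmxK (u *m A *m v^T)) mxE.
by rewrite !trmx_mul trmxK sA mulmxA.
Qed.

Lemma gram_posemidef N (H : 'M[R]_(N, n)) : posemidef (H^T *m H).
Proof.
move=> u; rewrite /mxform mulmxA -[u *m H^T *m H *m u^T]mulmxA.
rewrite -{2}(trmxK H) -trmx_mul mxE.
by apply: sumr_ge0 => i _; rewrite !mxE -expr2 sqr_ge0.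
Qed.

Lemma posdef_posemidef A : posdef A -> posemidef A.
Proof.
move=> pdA x; have [->|x0] := eqVneq x 0; first by rewrite mxform0.
exact/ltW/pdA.
Qed.

Lemma posdefD A M : posemidef A -> posdef M -> posdef (A + M).
Proof. by move=> psdA pdM x x0; rewrite mxformD ltr_wpDl ?psdA ?pdM. Qed.

Lemma posdef_unitmx A : posdef A -> A \in unitmx.
Proof.
move=> pdA; rewrite unitmxE unitfE; apply/negP => /det0P [v v0 vA].
by have := pdA v v0; rewrite /mxform vA mul0mx mxE ltxx.
Qed.

Lemma continuous_mxform A : continuous (fun x => mxform A x x).
Proof.
under eq_fun do rewrite mxformE.
apply: continuous_sum => j; apply: continuous_sum => i x.
have cst_Aij : {for x, continuous (fun=> A i j)} by exact: cst_continuous.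
have := continuousM (continuousM (@coord_continuous R 1 n 0 i x) cst_Aij)
  (@coord_continuous R 1 n 0 j x).
exact.
Qed.

Lemma posdef_coercive A :
  posdef A -> exists2 d, 0 < d & forall x, d * `|x| ^+ 2 <= mxform A x x.
Proof.
move=> pdA; pose sphere := [set x : 'rV[R]_n | `|x| = 1].
have normalize x : x != 0 -> sphere (`|x|^-1 *: x).
  by move=> x0; rewrite /sphere /= normrZ normfV normr_id mulVf ?normr_eq0.
have [[y /normalize sphere_y]|sphere0] := pselect (exists x, x != 0); last first.
  exists 1 => // x; have [->|x0] := eqVneq x 0.
    by rewrite normr0 expr0n mulr0 mxform0.
  by exfalso; apply: sphere0; exists x.
have sphere_compact : compact sphere.
  apply: bounded_closed_compact.
    by exists 1; split; [exact: num_real | move=> r r1 x /= ->; exact: ltW].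
  apply: (@preimage_closed _ _ (fun x : 'rV[R]_n => `|x|) [set x | x = 1]).
    by move=> x _; exact: norm_continuous.
  exact: closed_eq.
have [c /[!inE] c1 cmin] := EVT_min_rV (ex_intro _ _ sphere_y) sphere_compact
  (continuous_subspaceT (@continuous_mxform A)).
have c0 : c != 0 by rewrite -normr_eq0 c1 oner_neq0.
exists (mxform A c c); first exact: pdA.
move=> x; have [->|x0] := eqVneq x 0; first by rewrite normr0 expr0n mulr0 mxform0.
have := cmin _ (mem_set (normalize x x0)); rewrite mxformZZ exprVn => cx.
rewrite -(ler_pM2l (_ : 0 < `|x| ^- 2)) ?invr_gt0 ?exprn_gt0 ?normr_gt0 //.
by rewrite mulrCA mulVf ?mulr1 // expf_neq0 ?normr_eq0.
Qed.

Lemma mxform_le_sqr_norm A u :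
  mxform A u u <= (\sum_j \sum_i `|A i j|) * `|u| ^+ 2.
Proof.
rewrite mxformE big_distrl; apply: ler_sum => j _.
rewrite big_distrl; apply: ler_sum => i _ /=.
apply: le_trans (ler_norm _) _; rewrite !normrM.
rewrite [`|u 0 i| * _]mulrC -mulrA expr2; apply: ler_wpM2l => //.
by apply: ler_pM => //; exact: mx_entry_le_norm.
Qed.

Lemma posdef_dominates M A :
  posdef M -> exists2 t, 0 <= t & forall u, mxform A u u <= t * mxform M u u.
Proof.
move=> /posdef_coercive [d d0 dM]; pose C := \sum_j \sum_i `|A i j|.
have C0 : 0 <= C by apply: sumr_ge0 => j _; apply: sumr_ge0.
exists (C / d) => [|u]; first exact: divr_ge0 C0 (ltW d0).
apply: le_trans (mxform_le_sqr_norm A u) _.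
by rewrite -mulrA ler_wpM2l // ler_pdivlMl.
Qed.

Lemma mxform_expr_contraction S G q :
  0 <= q -> (forall u, mxform S (u *m G) (u *m G) <= q * mxform S u u) ->
  forall k u, mxform S (u *m G ^+ k) (u *m G ^+ k) <= q ^+ k * mxform S u u.
Proof.
move=> q0 contrG; elim=> [|k IHk] u; first by rewrite !expr0 mul1r mulmx1.
rewrite exprSr -mulmxE mulmxA; apply: le_trans (contrG _) _.
by rewrite exprS -mulrA ler_wpM2l.
Qed.

Lemma contraction_mulmx_expr_cvg0 S G q m (X : 'M[R]_(m, n)) :
  posdef S -> 0 <= q -> q < 1 ->
  (forall u, mxform S (u *m G) (u *m G) <= q * mxform S u u) ->
  (fun k => X *m G ^+ k) @ \oo --> (0 : 'M[R]_(m, n)).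
Proof.
move=> pdS q0 q1 contrG; have [d d0 dS] := posdef_coercive pdS.
have psdS := posdef_posemidef pdS.
pose E := \sum_i mxform S (row i X) (row i X).
have E0 : 0 <= E by apply: sumr_ge0 => i _; exact: psdS.
apply: (@sqr_norm_geometric_cvg0 _ _ _ (d^-1 * E) q); first by rewrite ger0_norm.
move=> k; apply: sqr_mx_norm_le => [|i j].
  by rewrite mulr_ge0 ?exprn_ge0 // mulr_ge0 // invr_ge0 ltW.
have -> : (X *m G ^+ k) i j = (row i X *m G ^+ k) 0 j by rewrite -row_mul [RHS]mxE.
set w := row i X *m G ^+ k.
have w_entry : `|w 0 j| ^+ 2 <= `|w| ^+ 2.
  by rewrite !expr2 ler_pM // mx_entry_le_norm.
have Sw : mxform S w w <= q ^+ k * E.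
  apply: le_trans (mxform_expr_contraction q0 contrG k _) _.
  rewrite ler_wpM2l ?exprn_ge0 // /E (bigD1 i) //= lerDl.
  by apply: sumr_ge0 => l _; exact: psdS.
apply: le_trans w_entry _; rewrite -mulrA [E * _]mulrC ler_pdivlMl //.
exact: le_trans (dS w) Sw.
Qed.

End QuadraticForms.

Section Contraction.
Variables (R : realType) (n : nat) (A M : 'M[R]_n).
Hypotheses (symA : A^T = A) (psdA : posemidef A) (pdM : posdef M).

Lemma F_mat_contraction t :
  0 <= t -> (forall u, mxform A u u <= t * mxform M u u) ->
  forall u, mxform (A + M) (u *m F_mat A M) (u *m F_mat A M)
    <= t / (1 + t) * mxform (A + M) u u.
Proof.
move=> t0 At u; set v := u *m F_mat A M.
have vS : v *m (A + M) = u *m A.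
  by rewrite /v /F_mat mulmxA mulmxKV // (posdef_unitmx (posdefD psdA pdM)).
have Svv : mxform (A + M) v v = mxform A u v by rewrite /mxform vS.
have psd_uv := psdA (u - v); rewrite mxformBB (mxform_sym v u symA) in psd_uv.
have Mvv := posdef_posemidef pdM v.
have SvvA : mxform (A + M) v v <= mxform A u u.
  by move: Svv; rewrite mxformD; lra.
apply: le_trans SvvA _; rewrite mxformD mulrAC ler_pdivlMr; last by lra.
have := At u; nra.
Qed.

End Contraction.

Lemma F_mat_geometric_sum (R : realType) n (A M : 'M[R]_n) c :
  M \in unitmx -> A + M \in unitmx ->
  invmx (A + M) *m \sum_(i < c.+1) F_mat A M ^+ i
    = invmx M *m (1 - F_mat A M ^+ c.+1).
Proof.
move=> Mu Su; set F := F_mat A M.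
have IF : 1 - F = M *m invmx (A + M).
  by rewrite /F /F_mat -idmxE -{1}(mulmxV Su) -mulmxBl addrAC subrr add0r.
have telescope : (1 - F) * \sum_(i < c.+1) F ^+ i = 1 - F ^+ c.+1.
  by rewrite -[1 - F]opprB mulNr -subrX1 opprB.
by rewrite -telescope -mulmxE IF -mulmxA mulKmx.
Qed.

Theorem theorem3 (R : realType) (N n : nat) (H : 'M[R]_(N, n)) (Rm : 'M[R]_n) :
  sym_posdef Rm ->
  (fun c : nat => F_ar H Rm c) @ \oo --> mp_pinv (H^T *m H) - invmx Rm.
Proof.
move=> [_ pdR]; set A := H^T *m H; set F := F_mat A Rm.
have symA : A^T = A by rewrite /A trmx_mul trmxK.
have psdA : posemidef A := gram_posemidef H.
have pdS : posdef (A + Rm) := posdefD psdA pdR.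
have [t t0 At] := posdef_dominates A pdR.
have q0 : 0 <= t / (1 + t) by rewrite divr_ge0 ?addr_ge0.
have q1 : t / (1 + t) < 1 by rewrite ltr_pdivrMr; lra.
have -> : (fun c => F_ar H Rm c)
    = fun c => (mp_pinv A - invmx Rm) + (invmx Rm *m F) *m F ^+ c.
  apply/funext => c; rewrite /F_ar /F_aim F_mat_geometric_sum ?posdef_unitmx //.
  by rewrite mulmxBr -idmxE mulmx1 exprS -mulmxE mulmxA opprB addrA addrAC.
rewrite -[X in _ --> X]addr0; apply: cvgD; first exact: cvg_cst.
exact: contraction_mulmx_expr_cvg0 pdS q0 q1 (F_mat_contraction symA psdA pdR t0 At).
Qed.
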